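(* Let $J_3$ be the graph with vertex set $\{a,b,c,d,e,f,g,h,i,j,k\}$ whose edges are: $ab$; $ac,ad,ae,af,ag$ and $bc,bd,be,bf,bg$; $cd,de,ef,fg$; $ha,hd,he$; $ia,ie,if$; $jb,jd,je$; $kb,ke,kf$. Let $H$ be a subgraph of $J_3$ with maximum degree at most three that contains no edge incident with $a$ or $b$. Then $J_3-E(H)$ contains a copy of $K_4$, or a subgraph isomorphic to $J_1$ or to $J_2$ via an isomorphism mapping the vertices $a,b$ of $J_1$ (resp. $J_2$) to the vertices $a,b$ of $J_3$ respectively.
   Context: $J_1$ is the graph with vertex set $\{a,b,c,d,e\}$ and edge set $\{ab,ac,bc,ae,be,cd,de,ad\}$; $J_2$ is the graph with the same vertex set and edge set $\{ab,ac,bc,ae,be,cd,de,bd\}$. (In the paper, the edge $ab$ is called the handle, and the conclusion is phrased as ''a subgraph isomorphic to $J_1$ or $J_2$ with handle $ab$''.) *)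

From mathcomp Require Import all_boot.
Set Implicit Arguments. Unset Strict Implicit. Unset Printing Implicit Defensive.

Definition adj_of {n : nat} (es : seq (nat * nat)) : rel 'I_n :=
  fun x y => ((nat_of_ord x, nat_of_ord y) \in es) || ((nat_of_ord y, nat_of_ord x) \in es).

(* J1, J2 on vertices 'I_5 : a=0, b=1, c=2, d=3, e=4. *)
Definition J1_edges : seq (nat * nat) :=
  [:: (0,1); (0,2); (1,2); (0,4); (1,4); (2,3); (3,4); (0,3)].          (* ab ac bc ae be cd de ad *)
Definition J2_edges : seq (nat * nat) :=
  [:: (0,1); (0,2); (1,2); (0,4); (1,4); (2,3); (3,4); (1,3)].          (* ab ac bc ae be cd de bd *)
Definition J1 : rel 'I_5 := @adj_of 5 J1_edges.
Definition J2 : rel 'I_5 := @adj_of 5 J2_edges.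

(* J3 on vertices 'I_11 : a=0,b=1,c=2,d=3,e=4,f=5,g=6,h=7,i=8,j=9,k=10. *)
Definition J3_edges : seq (nat * nat) :=
  [:: (0,1);
      (0,2); (0,3); (0,4); (0,5); (0,6);
      (1,2); (1,3); (1,4); (1,5); (1,6);
      (2,3); (3,4); (4,5); (5,6);
      (7,0); (7,3); (7,4);
      (8,0); (8,4); (8,5);
      (9,1); (9,3); (9,4);
      (10,1); (10,4); (10,5)].
Definition J3 : rel 'I_11 := @adj_of 11 J3_edges.

Definition has_K4 (T : finType) (G : rel T) : Prop :=
  exists S : {set T}, #|S| = 4 /\ {in S &, forall x y, x != y -> G x y}.

Definition has_copy_fixing (T U : finType) (F : rel U) (G : rel T) (u v : U) (u' v' : T) : Prop :=
  exists phi : U -> T, [/\ injective phi, phi u = u', phi v = v' &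
                           forall x y, F x y -> G (phi x) (phi y)].

From mathcomp Require Import all_boot.

Set Implicit Arguments.
Unset Strict Implicit.
Unset Printing Implicit Defensive.

(* Since H avoids a and b, all edges of J3 at a and b survive in J3 - E(H).
   Hence a spine edge xy (x, y consecutive on c d e f g) missing from H gives
   the K4 on {a, b, x, y}, and otherwise H contains the whole spine.  The ears
   h and j on d e, i and k on e f each yield a copy of J1 (h, i, adjacent to a)
   or of J2 (j, k, adjacent to b) as soon as both ear edges avoid H.  They
   cannot all be blocked: e already has two spine edges in H, so at most one
   ear is blocked at e, the other three are blocked at d or f, and two of them
   on the same side would give d or f a fourth H-edge. *)

Lemma adj_of_sym n (es : seq (nat * nat)) : symmetric (@adj_of n es).
Proof. by move=> x y; rewrite /adj_of orbC. Qed.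

Section SimpleGraphs.

Variable T : finType.
Implicit Types (G H : rel T) (s : seq T).

Lemma size_le_card_neighbours H x s :
  uniq s -> all (H x) s -> size s <= #|[set y | H x y]|.
Proof.
move=> s_uniq /allP sH; rewrite -(card_uniqP s_uniq).
by apply/subset_leq_card/subsetP => y /sH; rewrite inE.
Qed.

Lemma has_K4_pairwise G s :
  symmetric G -> uniq s -> size s = 4 -> pairwise G s -> has_K4 G.
Proof.
move=> G_sym s_uniq s4 s_clique; exists [set x in s].
split; first by rewrite cardsE (card_uniqP s_uniq).
move=> x y; rewrite !inE => xs ys; move/(pairwiseP x): s_clique => Gs.
rewrite -(nth_index x xs) -(nth_index x ys) nth_uniq ?index_mem //.
case: ltngtP => // [lt_xy | lt_yx] _; last rewrite G_sym.
  by apply: Gs; rewrite ?inE ?index_mem.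
by apply: Gs; rewrite ?inE ?index_mem.
Qed.

Lemma has_copy_fixing_tuple n (es : seq (nat * nat)) G (t : n.-tuple T) x0
    (u v : 'I_n) :
  symmetric G -> uniq t -> all (fun p => G (nth x0 t p.1) (nth x0 t p.2)) es ->
  has_copy_fixing (adj_of es) G u v (tnth t u) (tnth t v).
Proof.
move=> G_sym t_uniq esG; exists (tnth t); split => //; first exact/tuple_uniqP.
move=> x y /orP[] /(allP esG) /=; rewrite -!(tnth_nth x0) //.
by rewrite G_sym.
Qed.

End SimpleGraphs.

(* Vertices are concrete ordinals rather than [inord k], which does not
   compute because the bound proof inside [inord] is opaque. *)
Local Notation a := (@Ordinal 11 0 isT).
Local Notation b := (@Ordinal 11 1 isT).
Local Notation c := (@Ordinal 11 2 isT).
Local Notation d := (@Ordinal 11 3 isT).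
Local Notation e := (@Ordinal 11 4 isT).
Local Notation f := (@Ordinal 11 5 isT).
Local Notation g := (@Ordinal 11 6 isT).
Local Notation h := (@Ordinal 11 7 isT).
Local Notation i := (@Ordinal 11 8 isT).
Local Notation j := (@Ordinal 11 9 isT).
Local Notation k := (@Ordinal 11 10 isT).

Section J3MinusH.

Variable H : rel 'I_11.
Hypothesis H_sym : symmetric H.
Hypothesis H_deg : forall x : 'I_11, #|[set y | H x y]| <= 3.
Hypothesis H_handle : forall y : 'I_11, ~~ H a y /\ ~~ H b y.

Local Notation G := (fun x y : 'I_11 => J3 x y && ~~ H x y).

Let G_sym : symmetric G.
Proof. by move=> x y; rewrite H_sym /J3 adj_of_sym. Qed.

Let H_a y : H a y = false. Proof. by apply/negbTE; case: (H_handle y). Qed.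
Let H_b y : H b y = false. Proof. by apply/negbTE; case: (H_handle y). Qed.

Lemma has_K4_of_handle_edge x y : ~~ H x y ->
  uniq [:: a; b; x; y] -> [&& J3 a x, J3 a y, J3 b x, J3 b y & J3 x y] ->
  has_K4 G.
Proof.
move=> Nxy abxy_uniq /and5P[Jax Jay Jbx Jby Jxy].
apply: (@has_K4_pairwise _ _ [:: a; b; x; y] G_sym) => //=.
by rewrite !H_a !H_b Jax Jay Jbx Jby Jxy Nxy.
Qed.

Lemma has_K4_of_spine_gap : ~~ [&& H c d, H d e, H e f & H f g] -> has_K4 G.
Proof.
by rewrite !negb_and => /or4P[] gap; apply: (has_K4_of_handle_edge gap).
Qed.

Lemma ear_free_of_spine : H c d -> H d e -> H e f -> H f g ->
  [|| ~~ H d h && ~~ H e h, ~~ H d j && ~~ H e j,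
      ~~ H e i && ~~ H f i | ~~ H e k && ~~ H f k].
Proof.
move=> Hcd Hde Hef Hfg.
have deg_le3 x s : uniq s -> size s = 4 -> ~~ all (H x) s.
  move=> s_uniq s4; apply/negP => /(size_le_card_neighbours s_uniq).
  by rewrite s4 => /leq_trans/(_ (H_deg x)).
have e_one_more x y : uniq [:: d; f; x; y] -> ~~ (H e x && H e y).
  move=> dfxy_uniq; move: (deg_le3 e _ dfxy_uniq erefl).
  by rewrite /= (H_sym e d) Hde Hef andbT.
have d_full : ~~ (H d h && H d j).
  by move: (deg_le3 d [:: c; e; h; j] isT erefl); rewrite /= (H_sym d c) Hcd Hde andbT.
have f_full : ~~ (H f i && H f k).
  by move: (deg_le3 f [:: e; g; i; k] isT erefl); rewrite /= (H_sym f e) Hef Hfg andbT.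
move: (e_one_more h i isT) (e_one_more h j isT) (e_one_more h k isT).
move: (e_one_more i j isT) (e_one_more i k isT) (e_one_more j k isT) d_full f_full.
by case: (H e h); case: (H e i); case: (H e j); case: (H e k);
   case: (H d h); case: (H d j); case: (H f i); case: (H f k).
Qed.

Lemma has_J1_of_ear x z y : ~~ H x z -> ~~ H z y ->
  uniq [:: a; b; x; z; y] ->
  [&& J3 a x, J3 b x, J3 a y, J3 b y, J3 a z, J3 x z & J3 z y] ->
  has_copy_fixing J1 G (inord 0) (inord 1) a b.
Proof.
move=> Nxz Nzy abxzy_uniq /and5P[Jax Jbx Jay Jby /and3P[Jaz Jxz Jzy]].
rewrite (inord_val (ord0 : 'I_5)) (inord_val (@Ordinal 5 1 isT)).
apply: (has_copy_fixing_tuple (t := [tuple a; b; x; z; y]) (x0 := a)) => //=.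
by rewrite !H_a !H_b Jax Jbx Jay Jby Jaz Jxz Jzy Nxz Nzy.
Qed.

Lemma has_J2_of_ear x z y : ~~ H x z -> ~~ H z y ->
  uniq [:: a; b; x; z; y] ->
  [&& J3 a x, J3 b x, J3 a y, J3 b y, J3 b z, J3 x z & J3 z y] ->
  has_copy_fixing J2 G (inord 0) (inord 1) a b.
Proof.
move=> Nxz Nzy abxzy_uniq /and5P[Jax Jbx Jay Jby /and3P[Jbz Jxz Jzy]].
rewrite (inord_val (ord0 : 'I_5)) (inord_val (@Ordinal 5 1 isT)).
apply: (has_copy_fixing_tuple (t := [tuple a; b; x; z; y]) (x0 := a)) => //=.
by rewrite !H_a !H_b Jax Jbx Jay Jby Jbz Jxz Jzy Nxz Nzy.
Qed.

End J3MinusH.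

Theorem lemma3 (H : rel 'I_11) :
  (* H is a (simple) subgraph of J3, given by its edge relation *)
  symmetric H ->
  subrel H J3 ->
  (* maximum degree of H at most three *)
  (forall x : 'I_11, #|[set y | H x y]| <= 3) ->
  (* no edge of H is incident with a (= 0) or b (= 1) *)
  (forall y : 'I_11, ~~ H (inord 0) y /\ ~~ H (inord 1) y) ->
  let G := fun x y : 'I_11 => J3 x y && ~~ H x y in
  has_K4 G \/
  has_copy_fixing J1 G (inord 0) (inord 1) (inord 0) (inord 1) \/
  has_copy_fixing J2 G (inord 0) (inord 1) (inord 0) (inord 1).
Proof.
rewrite (inord_val a) (inord_val b) => H_sym _ H_deg H_handle G.
have [spine | gap] := boolP [&& H c d, H d e, H e f & H f g]; last first.
  by left; apply: (has_K4_of_spine_gap H_sym H_handle gap).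
right; case/and4P: spine => Hcd Hde Hef Hfg.
case/or4P: (ear_free_of_spine H_sym H_deg Hcd Hde Hef Hfg) => /andP[N1 N2].
- by left; rewrite (H_sym e) in N2; apply: (has_J1_of_ear H_sym H_handle N1 N2).
- by right; rewrite (H_sym e) in N2; apply: (has_J2_of_ear H_sym H_handle N1 N2).
- by left; rewrite (H_sym f) in N2; apply: (has_J1_of_ear H_sym H_handle N1 N2).
- by right; rewrite (H_sym f) in N2; apply: (has_J2_of_ear H_sym H_handle N1 N2).
Qed.
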